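(* Let $w$ be a word over $\Omega$ of length $k$. Then $\{ i \in \{1,\dots,k-1\} : b_i = 1\} = \{ i : [i] = s\} \cup (I \setminus \{s\})$.
   Context: A word of length $k$ is written $w = w_k \dots w_1$. For $1\le i\le k$, $b_i = 1$ if $w_j = w_{k-i+j}$ for all $j=1,\dots,i$, else $b_i=0$. $s = \max\{j \in\{1,\dots,k-1\}: b_j = 1\}$, or $0$ if none. For $1 \le i \le k-1$ with $b_i=1$, $[i] = \max\{ j \in \{1,\dots,k-1\} : b_j=1 \text{ and } i = k - t(k-j) \text{ for some integer } 1 \le t \le \lfloor k/(k-j)\rfloor\}$; $I = \{[i] : 1\le i \le k-1,\ b_i=1\}$. *)

From mathcomp Require Import all_boot.
Set Implicit Arguments. Unset Strict Implicit. Unset Printing Implicit Defensive.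

(* A word w = w_k ... w_1 of length k over the alphabet T is given by the
   letters w j for 1 <= j <= k (values of w outside {1..k} are never used). *)

Section Borders.
Variables (T : eqType) (w : nat -> T) (k : nat).

Definition bb (i : nat) : bool :=
  all (fun j => w j == w (k - i + j)) (iota 1 i).

(* s = max { j in {1..k-1} : b_j = 1 }, or 0 if none *)
Definition ss : nat := \max_(1 <= j < k | bb j) j.

Definition bracket (i : nat) : nat :=
  \max_(1 <= j < k | bb j &&
          has (fun t => i == k - t * (k - j)) (iota 1 (k %/ (k - j)))) j.

Definition Iset : seq nat := [seq bracket i | i <- iota 1 (k - 1) & bb i].

End Borders.

(* Writing [k - i] for the period associated with the border [i], the bracket
   [[i]] is the longest border whose period [p] satisfies [i = k - t p].
   Since [[i]] >= i (take [t = 1]), the only way [[i]] can differ from [i] is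
   with [t >= 2], i.e. [2p <= k]. The smallest period [p0 = k - s] then
   satisfies [p0 + p <= k], so the Euclidean subtraction of periods shows that
   [p0] divides [p]; hence [i] is also reached from [s], and [[i]] = s.
   So every border either has bracket [s] or is its own bracket, and then it
   lies in [I]; conversely every element of [I] is a border. *)

From mathcomp Require Import all_boot.
From mathcomp Require Import zify.

Set Implicit Arguments.
Unset Strict Implicit.
Unset Printing Implicit Defensive.

Lemma bigmax_nat_cond_spec (P : pred nat) a b :
  let m := \max_(a <= j < b | P j) j in (m == 0) || [&& P m, a <= m & m < b].
Proof.
rewrite /= big_nat_cond.
apply: (big_ind (fun x => (x == 0) || [&& P x, a <= x & x < b])) => //.
- by move=> x y Hx Hy; rewrite /maxn; case: ifP.
- by move=> j /andP[/andP[h1 h2] Pj]; rewrite Pj h1 h2 orbT.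
Qed.

Lemma leq_bigmax_nat_cond (P : pred nat) a b j :
  a <= j < b -> P j -> j <= \max_(a <= j < b | P j) j.
Proof. by move=> hj Pj; apply: (leq_bigmax_seq j) => //; rewrite mem_index_iota. Qed.

Section Periods.
Variables (T : eqType) (w : nat -> T) (k : nat).

Definition period (p : nat) :=
  forall j, 0 < j -> j + p <= k -> w j = w (j + p).

Lemma bb_period i : i <= k -> bb w k i <-> period (k - i).
Proof.
move=> hik; rewrite /bb; split.
- move=> /allP H j hj hjk; have := H j; rewrite mem_iota.
  have -> : 1 <= j < 1 + i by lia.
  by move=> /(_ isT)/eqP ->; congr w; lia.
- move=> H; apply/allP => j; rewrite mem_iota => /andP[h1 h2].
  by apply/eqP; rewrite H; [congr w; lia | lia | lia].
Qed.

Lemma period_sub p q :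
  0 < p -> p < q -> p + q <= k -> period p -> period q -> period (q - p).
Proof.
move=> hp hpq hk Pp Pq j hj hjk.
case: (leqP (j + q) k) => hjq.
- rewrite (Pq j hj hjq).
  have := Pp (j + (q - p)); rewrite (_ : j + (q - p) + p = j + q); last by lia.
  by move=> -> //; lia.
- have e := Pp (j - p); rewrite (_ : j - p + p = j) in e; last by lia.
  rewrite -e; [|lia|lia].
  by rewrite (Pq (j - p)); [congr w; lia | lia | lia].
Qed.

(* A weak Fine--Wilf: with [p0 + p <= k], subtracting [p0] from [p] stays
   inside the range where [period_sub] applies. *)
Lemma min_period_dvd p0 :
  0 < p0 -> period p0 -> (forall r, 0 < r < k -> period r -> p0 <= r) ->
  forall p, 0 < p -> p0 + p <= k -> period p -> p0 %| p.
Proof.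
move=> hp0 P0 Hmin p; elim: p {-2}p (leqnn p) => [|n IH] p hpn hp hk Pp.
  lia.
have hle : p0 <= p by apply: Hmin => //; lia.
case: (ltngtP p0 p) => hc; [|lia|by rewrite hc dvdnn].
have Pd := period_sub hp0 hc hk P0 Pp.
have H : p0 %| p - p0 by apply: IH => //; try lia; apply: Hmin => //; lia.
by rewrite (_ : p = p - p0 + p0) ?dvdn_add ?dvdnn //; lia.
Qed.

End Periods.

Definition reaches (k x j : nat) : bool :=
  has (fun t => x == k - t * (k - j)) (iota 1 (k %/ (k - j))).

Lemma reachesP k x j : j < k ->
  reflect (exists t, [/\ 0 < t, t * (k - j) <= k & x = k - t * (k - j)])
          (reaches k x j).
Proof.
move=> hjk; apply: (iffP hasP).
- move=> [t]; rewrite mem_iota => /andP[h1 h2] /eqP e.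
  by exists t; split => //; rewrite -leq_divRL //; lia.
- move=> [t [h1 h2 e]]; exists t; last by rewrite e.
  rewrite mem_iota h1 /=; have : t <= k %/ (k - j) by rewrite leq_divRL //; lia.
  lia.
Qed.

Section Brackets.
Variables (T : eqType) (w : nat -> T) (k : nat).
Local Notation border := (bb w k).
Local Notation s := (ss w k).
Local Notation bracket := (bracket w k).

Lemma ss_spec : (s == 0) || [&& border s, 0 < s & s < k].
Proof. exact: bigmax_nat_cond_spec. Qed.

Lemma leq_border_ss j : 0 < j < k -> border j -> j <= s.
Proof. exact: leq_bigmax_nat_cond. Qed.

Lemma bracket_spec x :
  (bracket x == 0) || [&& border (bracket x) && reaches k x (bracket x),
                          0 < bracket x & bracket x < k].
Proof. exact: (bigmax_nat_cond_spec (fun j => border j && reaches k x j)). Qed.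

Lemma leq_bracket x j : 0 < j < k -> border j -> reaches k x j -> j <= bracket x.
Proof. by move=> hj bj rj; apply: leq_bigmax_nat_cond => //; rewrite bj. Qed.

Lemma bracket_border i : 0 < i < k -> border i ->
  [/\ 0 < bracket i < k, border (bracket i), reaches k i (bracket i)
    & i <= bracket i].
Proof.
move=> hi bi.
have hle : i <= bracket i.
  by apply: leq_bracket => //; apply/reachesP; [lia | exists 1; split; lia].
by case/orP: (bracket_spec i) => [/eqP|/and3P[/andP[-> ->] -> ->]]; [lia|].
Qed.

Lemma min_period_ss r : 0 < r < k -> period w k r -> k - s <= r.
Proof.
move=> hr Pr.
have br : border (k - r) by apply/bb_period; rewrite ?subKn //; lia.
by have := leq_border_ss _ br; lia.
Qed.

Lemma reaches_ss i j : 0 < j < k -> border j -> reaches k i j -> i < j ->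
  reaches k i s.
Proof.
move=> hj bj /reachesP rj hij; have [|t [ht1 ht2 ht3]] := rj; first lia.
set p := k - j in ht2 ht3.
have ht : 1 < t by case: t ht1 ht2 ht3 => [|[|t]] //; lia.
have hjs : j <= s by apply: leq_border_ss.
case/orP: ss_spec => [/eqP|/and3P[bs hs1 hs2]]; first lia.
have Pp : period w k p by apply/bb_period; lia.
have P0 : period w k (k - s) by apply/bb_period; lia.
have hp0p : k - s <= p by apply: min_period_ss; [lia | exact: Pp].
have h2p : 2 * p <= t * p by rewrite leq_mul2r ht orbT.
have /dvdnP[m hm] : k - s %| p.
  by apply: (min_period_dvd _ P0 (@min_period_ss)) => //; lia.
apply/reachesP; first lia.
exists (t * m); rewrite -mulnA -hm; split => //.
by case: m hm => [|m] hm; [lia | nia].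
Qed.

Lemma bracket_neq_ss i : 0 < i < k -> border i -> bracket i != s -> bracket i = i.
Proof.
move=> hi bi hne; have [hj bj rj hij] := bracket_border hi bi.
case: (ltngtP i (bracket i)) => hc; [|lia|by []].
have hjs := leq_border_ss hj bj.
case/orP: ss_spec => [/eqP|/and3P[bs hs1 hs2]]; first lia.
have hs : 0 < s < k by rewrite hs1 hs2.
by have := leq_bracket hs bs (reaches_ss hj bj rj hc); move: hne; lia.
Qed.

Lemma mem_Iset_border i : i \in Iset w k -> (0 < i < k) && border i.
Proof.
move=> /mapP[j]; rewrite mem_filter mem_iota => /andP[bj hj] ->.
have hj' : 0 < j < k by lia.
by have [-> -> _ _] := bracket_border hj' bj.
Qed.

Lemma mem_Iset_fixed i : 0 < i < k -> border i -> bracket i = i -> i \in Iset w k.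
Proof.
move=> hi bi e; apply/mapP; exists i => //.
by rewrite mem_filter bi mem_iota; lia.
Qed.

End Brackets.

Theorem corollary4p1 (T : eqType) (w : nat -> T) (k : nat) (i : nat) :
  ((1 <= i <= k - 1) && bb w k i) =
  (((1 <= i <= k - 1) && bb w k i && (bracket w k i == ss w k))
   || ((i \in Iset w k) && (i != ss w k))).
Proof.
have range_eq : (1 <= i <= k - 1) = (0 < i < k) by apply/idP/idP; lia.
rewrite range_eq; case hB: ((0 < i < k) && bb w k i) => /=; last first.
  by symmetry; apply/negbTE/negP => /andP[/mem_Iset_border]; rewrite hB.
have /andP[hi bi] := hB.
have [//|hne] := eqVneq (bracket w k i) (ss w k).
have e := bracket_neq_ss hi bi hne.
by rewrite mem_Iset_fixed // -e.
Qed.
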